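(* For every $n\ge1$, $\mathsf{COH}$ admits $n$-fairness preservation. That is, for all $A_0,A_1\subseteq 2^{<\omega}$, every set $C$ that is $n$-fair for $A_0,A_1$, and every uniformly $C$-computable sequence of sets $R_0,R_1,\dots$, there is an $\vec R$-cohesive set $G$ such that $G\oplus C$ is $n$-fair for $A_0,A_1$.
   Context: An infinite set $G$ is $\vec R$-cohesive for a sequence $R_0,R_1,\dots$ if for each $i$, either $G\subseteq^* R_i$ or $G\subseteq^*\overline{R_i}$, where $\subseteq^*$ means inclusion up to finitely many elements. $\mathsf{COH}$ is the statement that every uniform sequence of sets has a cohesive set. Strings are finite binary strings, and $\preceq$ is the prefix relation. Two strings are incomparable if neither is a prefix of the other. Matrices. An $m$-by-$n$ matrix $M$ is an array of strings $\sigma_{i,j}$ ($i<m$, $j<n$), with rows $M(i)=(\sigma_{i,0},\dots,\sigma_{i,n-1})$. It is disjoint if each row consists of pairwise incomparable strings. Formulas. An $m$-by-$n$ formula is a formula with distinguished finite-set variables $U_{i,j}$. It is $\Sigma^{0,X}_1$ if it is $\Sigma^0_1$ relative to $X$. Valuations. An $M$-valuation is a tuple $V=(B_{i,j})$ of finite sets $B_{i,j}\subseteq\{\tau:\tau\succeq\sigma_{i,j}\}$. We write $\varphi(V)$ for $\varphi$ evaluated at $U_{i,j}:=B_{i,j}$, and $V(i)=(B_{i,0},\dots,B_{i,n-1})$. We write $V>s$ if all strings occurring in $V$ have length $>s$. Essential. $\varphi$ is essential in $M$ if for every $s$ there is an $M$-valuation $V>s$ with $\varphi(V)$. Diagonalization.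 An $M$-valuation $V$ diagonalizes against $A_0,A_1$ if for every $i<m$ there are components $L,R$ of $V(i)$ with $L\subseteq A_0$ and $R\subseteq A_1$. Fairness. For $n\ge1$, a set $X$ is $n$-fair for $A_0,A_1$ if the following holds: for every $m$, every $\Sigma^{0,X}_1$ $m$-by-$2^nm$ formula $\varphi$, and every $m$-by-$2^nm$ disjoint matrix $M$ in which $\varphi$ is essential, there is an $M$-valuation $V$ diagonalizing against $A_0,A_1$ with $\varphi(V)$. *)

From mathcomp Require Import all_boot.
Set Implicit Arguments.
Unset Strict Implicit.
Unset Printing Implicit Defensive.

Inductive prog : Type :=
| PZero
| PSucc                              (* (head of args).+1 *)
| PProj (i : nat)                    (* i-th argument (0 if absent) *)
| POracle (i : nat)                  (* X (i-th argument), as 0/1 *)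
| PComp (f : prog) (gs : seq prog)
| PRec (f g : prog)                  (* primitive recursion on first argument *)
| PMu (f : prog).                    (* least y with f (y :: args) = 0 *)

Inductive eval (X : nat -> bool) : prog -> seq nat -> nat -> Prop :=
| eZero args : eval X PZero args 0
| eSucc args : eval X PSucc args (nth 0 args 0).+1
| eProj i args : eval X (PProj i) args (nth 0 args i)
| eOracle i args : eval X (POracle i) args (nat_of_bool (X (nth 0 args i)))
| eComp f gs args ys y :
    evalList X gs args ys -> eval X f ys y -> eval X (PComp f gs) args y
| eRec0 f g rest y : eval X f rest y -> eval X (PRec f g) (0 :: rest) y
| eRecS f g k rest z y :
    eval X (PRec f g) (k :: rest) z -> eval X g (k :: z :: rest) y ->
    eval X (PRec f g) (k.+1 :: rest) y
| eMu f args y :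
    eval X f (y :: args) 0 ->
    (forall k, k < y -> exists z, eval X f (k :: args) z.+1) ->
    eval X (PMu f) args y
with evalList (X : nat -> bool) : seq prog -> seq nat -> seq nat -> Prop :=
| eNil args : evalList X [::] args [::]
| eCons g gs args y ys :
    eval X g args y -> evalList X gs args ys -> evalList X (g :: gs) args (y :: ys).

Definition halts (X : nat -> bool) (p : prog) (args : seq nat) : Prop :=
  exists y, eval X p args y.

Definition sigma1 (X : nat -> bool) (P : nat -> Prop) : Prop :=
  exists p, forall x, P x <-> halts X p [:: x].

Definition unif_computable (X : nat -> bool) (R : nat -> nat -> bool) : Prop :=
  exists p, forall i x, eval X p [:: i; x] (nat_of_bool (R i x)).

Definition join (G C : nat -> bool) : nat -> bool :=
  fun k => if odd k then C k./2 else G k./2.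

Definition infinite_set (G : nat -> bool) : Prop :=
  forall k, exists x, k <= x /\ G x.

Definition cohesive (R : nat -> nat -> bool) (G : nat -> bool) : Prop :=
  infinite_set G /\
  forall i, (exists k, forall x, k <= x -> G x -> R i x) \/
            (exists k, forall x, k <= x -> G x -> ~~ R i x).

(* strings are bitseq; sigma ⪯ tau is [prefix sigma tau] *)
Definition incomparable (s t : bitseq) : bool := ~~ prefix s t && ~~ prefix t s.

Definition matrix_s (m N : nat) := 'I_m -> 'I_N -> bitseq.
(* a tuple of finite sets of strings (finite sets represented by lists) *)
Definition valuation (m N : nat) := 'I_m -> 'I_N -> seq bitseq.

Definition disjoint_matrix m N (M : matrix_s m N) : Prop :=
  forall i (j j' : 'I_N), j != j' -> incomparable (M i j) (M i j').

Definition is_Mval m N (M : matrix_s m N) (V : valuation m N) : Prop :=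
  forall i j, all (fun tau => prefix (M i j) tau) (V i j).

Definition val_gt m N (s : nat) (V : valuation m N) : Prop :=
  forall i j, all (fun tau => s < size tau) (V i j).

(* canonical code of a finite set of strings (independent of list representation) *)
Definition code_set (B : seq bitseq) : seq nat := sort leq (undup (map pickle B)).

Definition code_val m N (V : valuation m N) : nat :=
  pickle [seq [seq code_set (V i j) | j <- enum 'I_N] | i <- enum 'I_m].

(* phi(V) for a formula phi, seen as a predicate on codes of valuations *)
Definition holds (phi : nat -> Prop) m N (V : valuation m N) : Prop :=
  phi (code_val V).

Definition essential m N (phi : nat -> Prop) (M : matrix_s m N) : Prop :=
  forall s, exists V : valuation m N, is_Mval M V /\ val_gt s V /\ holds phi V.

Definition diagonalizes m N (A0 A1 : pred bitseq) (V : valuation m N) : Prop :=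
  forall i, exists L R : 'I_N, {subset V i L <= A0} /\ {subset V i R <= A1}.

Definition fair (n : nat) (X : nat -> bool) (A0 A1 : pred bitseq) : Prop :=
  forall (m : nat) (phi : nat -> Prop) (M : matrix_s m (2 ^ n * m)),
    sigma1 X phi -> disjoint_matrix M -> essential phi M ->
    exists V : valuation m (2 ^ n * m),
      is_Mval M V /\ diagonalizes A0 A1 V /\ holds phi V.

(* Mathias forcing with reservoirs computable in C.  A condition is a finite
   stem with an infinite C-computable reservoir above it.  Cohesiveness for [R i]
   is met by shrinking the reservoir to [R i] or to its complement, whichever
   stays infinite.  A fairness instance, given by a program [p] (a formula
   Sigma^0_1 in G (+) C) and a matrix [M], is decided by applying the fairness
   of C to the formula psi(V): "some finite part F of the reservoir makes [p]
   halt on V with oracle (stem + F) (+) C".  If psi is essential in [M], C yields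
   a diagonalizing V together with such an F, and adding F to the stem (cutting
   the reservoir above the use) forces phi(V) for every later G.  Otherwise
   phi implies psi for every G in the condition, so phi is not essential.
   The formula psi is Sigma^0_1 in C because [p] run with a clock and with the
   code of F as a parameter is itself a C-computation, searched over by dovetailing. *)

From HB Require Import structures.
From mathcomp Require Import all_boot zify.
From Stdlib Require Import Classical ClassicalEpsilon FunctionalExtensionality.
Set Implicit Arguments.
Unset Strict Implicit.
Unset Printing Implicit Defensive.

(** * Programs: nested induction, determinism and the use principle *)

Fixpoint all_prop (P : prog -> Prop) (gs : seq prog) : Prop :=
  if gs is g :: gs' then P g /\ all_prop P gs' else True.

Definition prog_nested_ind (P : prog -> Prop)
  (HZ : P PZero) (HS : P PSucc) (HP : forall i, P (PProj i)) (HO : forall i, P (POracle i))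
  (HC : forall f gs, P f -> all_prop P gs -> P (PComp f gs))
  (HR : forall f g, P f -> P g -> P (PRec f g)) (HM : forall f, P f -> P (PMu f)) :
  forall p, P p :=
  fix F p := match p return P p with
  | PZero => HZ | PSucc => HS | PProj i => HP i | POracle i => HO i
  | PComp f gs => HC f gs (F f)
      ((fix G gs := match gs return all_prop P gs with
                    | [::] => I | g :: gs' => conj (F g) (G gs') end) gs)
  | PRec f g => HR f g (F f) (F g)
  | PMu f => HM f (F f) end.

Fixpoint tree_of_prog (p : prog) : GenTree.tree nat :=
  match p with
  | PZero => GenTree.Node 0 [::]
  | PSucc => GenTree.Node 1 [::]
  | PProj i => GenTree.Node 2 [:: GenTree.Leaf i]
  | POracle i => GenTree.Node 3 [:: GenTree.Leaf i]
  | PComp f gs => GenTree.Node 4 (tree_of_prog f :: map tree_of_prog gs)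
  | PRec f g => GenTree.Node 5 [:: tree_of_prog f; tree_of_prog g]
  | PMu f => GenTree.Node 6 [:: tree_of_prog f]
  end.

Fixpoint prog_of_tree (t : GenTree.tree nat) : prog :=
  match t with
  | GenTree.Node 1 _ => PSucc
  | GenTree.Node 2 (GenTree.Leaf i :: _) => PProj i
  | GenTree.Node 3 (GenTree.Leaf i :: _) => POracle i
  | GenTree.Node 4 (f :: gs) => PComp (prog_of_tree f) (map prog_of_tree gs)
  | GenTree.Node 5 (f :: g :: _) => PRec (prog_of_tree f) (prog_of_tree g)
  | GenTree.Node 6 (f :: _) => PMu (prog_of_tree f)
  | _ => PZero
  end.

Lemma tree_of_progK : cancel tree_of_prog prog_of_tree.
Proof.
elim/prog_nested_ind => //= [f gs -> H|f g -> ->|f ->] //.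
by congr PComp; elim: gs H => //= g gs IH [-> /IH ->].
Qed.

HB.instance Definition _ := Countable.copy prog (can_type tree_of_progK).

Section EvalInd.
Variable X : nat -> bool.
Variable P : prog -> seq nat -> nat -> Prop.
Variable Q : seq prog -> seq nat -> seq nat -> Prop.
Hypothesis HZ : forall args, P PZero args 0.
Hypothesis HS : forall args, P PSucc args (nth 0 args 0).+1.
Hypothesis HP : forall i args, P (PProj i) args (nth 0 args i).
Hypothesis HO : forall i args, P (POracle i) args (nat_of_bool (X (nth 0 args i))).
Hypothesis HC : forall f gs args ys y, evalList X gs args ys -> Q gs args ys ->
   eval X f ys y -> P f ys y -> P (PComp f gs) args y.
Hypothesis HR0 : forall f g rest y, eval X f rest y -> P f rest y -> P (PRec f g) (0 :: rest) y.
Hypothesis HRS : forall f g k rest z y,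
   eval X (PRec f g) (k :: rest) z -> P (PRec f g) (k :: rest) z ->
   eval X g (k :: z :: rest) y -> P g (k :: z :: rest) y -> P (PRec f g) (k.+1 :: rest) y.
Hypothesis HM : forall f args y, eval X f (y :: args) 0 -> P f (y :: args) 0 ->
   (forall k, k < y -> exists z, eval X f (k :: args) z.+1 /\ P f (k :: args) z.+1) ->
   P (PMu f) args y.
Hypothesis HN : forall args, Q [::] args [::].
Hypothesis HCo : forall g gs args y ys, eval X g args y -> P g args y ->
   evalList X gs args ys -> Q gs args ys -> Q (g :: gs) args (y :: ys).

Fixpoint eval_mut_ind p args y (H : eval X p args y) {struct H} : P p args y :=
  match H in eval _ p args y return P p args y with
  | eZero args => HZ args
  | eSucc args => HS args
  | eProj i args => HP i args
  | eOracle i args => HO i args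
  | eComp f gs args ys y Hl Hf => HC Hl (evalList_mut_ind Hl) Hf (eval_mut_ind Hf)
  | eRec0 f g rest y Hf => HR0 g Hf (eval_mut_ind Hf)
  | eRecS f g k rest z y H1 H2 => HRS H1 (eval_mut_ind H1) H2 (eval_mut_ind H2)
  | eMu f args y H0 Hlt => HM H0 (eval_mut_ind H0)
      (fun k hk => match Hlt k hk with
                   | ex_intro z Hz => ex_intro _ z (conj Hz (eval_mut_ind Hz)) end)
  end
with evalList_mut_ind gs args ys (H : evalList X gs args ys) {struct H} : Q gs args ys :=
  match H in evalList _ gs args ys return Q gs args ys with
  | eNil args => HN args
  | eCons g gs args y ys Hg Hl => HCo Hg (eval_mut_ind Hg) Hl (evalList_mut_ind Hl)
  end.
End EvalInd.

Lemma eval_det X p args y y' : eval X p args y -> eval X p args y' -> y = y'.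
Proof.
move=> H; move: p args y H y'.
apply: (@eval_mut_ind X (fun p args y => forall y', eval X p args y' -> y = y')
   (fun gs args ys => forall ys', evalList X gs args ys' -> ys = ys')).
- by move=> args y' H; inversion H.
- by move=> args y' H; inversion H.
- by move=> i args y' H; inversion H.
- by move=> i args y' H; inversion H.
- move=> f gs args ys y _ IHl _ IHf y' H.
  inversion H as [| | | |? ? ? ys' ? Hl Hf| | |]; subst.
  by rewrite (IHl _ Hl) in IHf; apply: IHf.
- by move=> f g rest y _ IHf y' H; inversion H; subst; apply: IHf.
- move=> f g k rest z y _ IH1 _ IH2 y' H.
  inversion H as [| | | | | |? ? ? ? ? ? Hrec Hg|]; subst.
  by rewrite (IH1 _ Hrec) in IH2; apply: IH2.
- move=> f args y _ IHf Hlt y' H.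
  inversion H as [| | | | | | |? ? ? Hzero Hbelow]; subst.
  case: (ltngtP y y') => // Hyy.
  + by case: (Hbelow y Hyy) => z /IHf.
  + by case: (Hlt y' Hyy) => z [_ /(_ _ Hzero)].
- by move=> args ys' H; inversion H.
- move=> g gs args y ys _ IHg _ IHl ys' H.
  inversion H as [|? ? ? ? ? Hg Hl]; subst.
  by rewrite (IHg _ Hg) (IHl _ Hl).
Qed.

Definition agree (u : nat) (X Y : nat -> bool) := forall z, z < u -> Y z = X z.

Lemma agree_mono u u' X Y : u <= u' -> agree u' X Y -> agree u X Y.
Proof. by move=> Hu H z Hz; apply: H; apply: leq_trans Hu. Qed.

Lemma uniform_bound (R : nat -> nat -> Prop) (y : nat) :
  (forall k u u', u <= u' -> R k u -> R k u') ->
  (forall k, k < y -> exists u, R k u) -> exists u, forall k, k < y -> R k u.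
Proof.
move=> Hm; elim: y => [|y IH] H; first by exists 0.
case: IH => [k Hk|u Hu]; first by apply: H; apply: ltnW.
case: (H y (ltnSn y)) => v Hv.
exists (maxn u v) => k; rewrite ltnS leq_eqVlt => /orP [/eqP->|Hk].
- by apply: Hm Hv; apply: leq_maxr.
- by apply: Hm (Hu k Hk); apply: leq_maxl.
Qed.

Lemma eval_use X p args y : eval X p args y ->
  exists u, forall Y, agree u X Y -> eval Y p args y.
Proof.
move=> H; move: p args y H.
apply: (@eval_mut_ind X
   (fun p args y => exists u, forall Y, agree u X Y -> eval Y p args y)
   (fun gs args ys => exists u, forall Y, agree u X Y -> evalList Y gs args ys)).
- by move=> args; exists 0 => Y _; constructor.
- by move=> args; exists 0 => Y _; constructor.
- by move=> i args; exists 0 => Y _; constructor.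
- move=> i args; exists (nth 0 args i).+1 => Y HY.
  by rewrite -(HY _ (ltnSn _)); constructor.
- move=> f gs args ys y _ [u1 H1] _ [u2 H2]; exists (maxn u1 u2) => Y HY.
  by econstructor; [apply: H1 | apply: H2]; apply: agree_mono HY;
    [apply: leq_maxl | apply: leq_maxr].
- by move=> f g rest y _ [u H1]; exists u => Y HY; constructor; apply: H1.
- move=> f g k rest z y _ [u1 H1] _ [u2 H2]; exists (maxn u1 u2) => Y HY.
  by econstructor; [apply: H1 | apply: H2]; apply: agree_mono HY;
    [apply: leq_maxl | apply: leq_maxr].
- move=> f args y _ [u1 H1] Hlt.
  have [u2 Hu2] : exists u, forall k, k < y ->
      exists z, forall Y, agree u X Y -> eval Y f (k :: args) z.+1.
    apply: (@uniform_bound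
      (fun k u => exists z, forall Y, agree u X Y -> eval Y f (k :: args) z.+1)).
    - move=> k u u' Huu [z Hz]; exists z => Y HY; apply: Hz; exact: agree_mono HY.
    - by move=> k /Hlt [z [_ [u Hu]]]; exists u, z.
  exists (maxn u1 u2) => Y HY; constructor.
  + by apply: H1; apply: agree_mono HY; apply: leq_maxl.
  + move=> k /Hu2 [z Hz]; exists z; apply: Hz.
    by apply: agree_mono HY; apply: leq_maxr.
- by move=> args; exists 0 => Y _; constructor.
- move=> g gs args y ys _ [u1 H1] _ [u2 H2]; exists (maxn u1 u2) => Y HY.
  by constructor; [apply: H1 | apply: H2]; apply: agree_mono HY;
    [apply: leq_maxl | apply: leq_maxr].
Qed.

(** * A library of primitive recursive programs *)

Section ProgramLibrary.
Variable X : nat -> bool.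

Lemma eval_eq_val p args v w : eval X p args v -> v = w -> eval X p args w.
Proof. by move=> H <-. Qed.

Lemma eval_comp1 f g args a y :
  eval X g args a -> eval X f [:: a] y -> eval X (PComp f [:: g]) args y.
Proof. by move=> Hg Hf; econstructor; last exact: Hf; repeat constructor. Qed.

Lemma eval_comp2 f g1 g2 args a b y : eval X g1 args a -> eval X g2 args b ->
  eval X f [:: a; b] y -> eval X (PComp f [:: g1; g2]) args y.
Proof. by move=> H1 H2 Hf; econstructor; last exact: Hf; repeat constructor. Qed.

Lemma eval_comp3 f g1 g2 g3 args a b c y :
  eval X g1 args a -> eval X g2 args b -> eval X g3 args c ->
  eval X f [:: a; b; c] y -> eval X (PComp f [:: g1; g2; g3]) args y.
Proof. by move=> H1 H2 H3 Hf; econstructor; last exact: Hf; repeat constructor. Qed.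

Lemma eval_rec f g (F : nat -> nat) rest :
  eval X f rest (F 0) -> (forall k, eval X g (k :: F k :: rest) (F k.+1)) ->
  forall k, eval X (PRec f g) (k :: rest) (F k).
Proof.
by move=> Hf Hg; elim=> [|k IH]; [constructor | econstructor; [apply: IH | apply: Hg]].
Qed.

Lemma evalList_cat gs1 gs2 args ys1 ys2 :
  evalList X gs1 args ys1 -> evalList X gs2 args ys2 ->
  evalList X (gs1 ++ gs2) args (ys1 ++ ys2).
Proof. by elim=> //= g gs args' y ys Hg _ IH H2; constructor => //; apply: IH. Qed.

Lemma evalList_proj args a n :
  evalList X [seq PProj i | i <- iota a n] args [seq nth 0 args i | i <- iota a n].
Proof. by elim: n a => [|n IH] a /=; constructor; [constructor | apply: IH]. Qed.

Lemma evalList_map (F : prog -> prog) (v : prog -> nat) gs args :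
  (forall g, g \in gs -> eval X (F g) args (v g)) -> evalList X (map F gs) args (map v gs).
Proof.
elim: gs => [|g gs IH] Hgs /=; constructor; first by apply: Hgs; rewrite mem_head.
by apply: IH => g' Hg'; apply: Hgs; rewrite in_cons Hg' orbT.
Qed.

Lemma evalList_nseq args n : evalList X (nseq n PZero) args (nseq n 0).
Proof. by elim: n => [|n IH] /=; constructor => //; constructor. Qed.

Fixpoint pConst n := if n is n'.+1 then PComp PSucc [:: pConst n'] else PZero.

Lemma eval_const n args : eval X (pConst n) args n.
Proof. by elim: n => [|n IH] /=; [constructor | apply: eval_comp1 IH _; constructor]. Qed.

Definition pIsZero := PRec (PComp PSucc [:: PZero]) PZero.
Lemma eval_isZero k rest : eval X pIsZero (k :: rest) (k == 0).
Proof.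
by apply: (@eval_rec _ _ (fun k => nat_of_bool (k == 0))) => [|k']; [apply: eval_comp1|];
  constructor.
Qed.

Definition pPred := PRec PZero (PProj 0).
Lemma eval_pred k rest : eval X pPred (k :: rest) k.-1.
Proof. by apply: (@eval_rec _ _ predn) => [|k']; constructor. Qed.

Definition pAdd := PRec (PProj 0) (PComp PSucc [:: PProj 1]).
Lemma eval_add a b rest : eval X pAdd (a :: b :: rest) (a + b).
Proof.
apply: (@eval_rec _ _ (addn^~ b)) => [|k]; first by constructor.
by apply: eval_comp1; constructor.
Qed.

(* truncated subtraction with the arguments swapped: [a; x] |-> x - a *)
Definition pSub := PRec (PProj 0) (PComp pPred [:: PProj 1]).
Lemma eval_sub a x rest : eval X pSub (a :: x :: rest) (x - a).
Proof.
apply: (@eval_rec _ _ (subn x)) => [|k]; first by rewrite subn0; constructor.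
by apply: eval_comp1; [constructor | rewrite subnS; apply: eval_pred].
Qed.

Definition pGuard := PRec PZero (PProj 2).
Lemma eval_guard a b rest : eval X pGuard (a :: b :: rest) (if a == 0 then 0 else b).
Proof. by apply: (@eval_rec _ _ (fun k => if k == 0 then 0 else b)) => [|k]; constructor. Qed.

Definition pOdd := PRec PZero (PComp pIsZero [:: PProj 1]).
Lemma eval_odd k rest : eval X pOdd (k :: rest) (odd k).
Proof.
apply: (@eval_rec _ _ (fun k => nat_of_bool (odd k))) => [|k']; first by constructor.
apply: eval_comp1; first by constructor.
by rewrite /=; have := eval_isZero (odd k') [::]; case: (odd k').
Qed.

Definition pHalf := PRec PZero (PComp pAdd [:: PComp pOdd [:: PProj 0]; PProj 1]).
Lemma eval_half k rest : eval X pHalf (k :: rest) k./2.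
Proof.
apply: (@eval_rec _ _ half) => [|k']; first by constructor.
apply: eval_comp2; [apply: eval_comp1; [constructor | apply: eval_odd] | constructor | ].
by rewrite /= uphalf_half; apply: eval_add.
Qed.

Definition pIterHalf := PRec (PProj 0) (PComp pHalf [:: PProj 1]).
Lemma eval_iterHalf x h rest : eval X pIterHalf (x :: h :: rest) (iter x half h).
Proof.
apply: (@eval_rec _ _ (fun k => iter k half h)) => [|k]; first by constructor.
by apply: eval_comp1; [constructor | apply: eval_half].
Qed.

Definition bitn (h x : nat) : bool := odd (iter x half h).

Definition pBit := PComp pOdd [:: PComp pIterHalf [:: PProj 1; PProj 0]].
Lemma eval_bit h x rest : eval X pBit (h :: x :: rest) (bitn h x).
Proof.
by apply: eval_comp1; [apply: eval_comp2; [constructor | constructor | apply: eval_iterHalf]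
  | apply: eval_odd].
Qed.

Definition pNeq0 := PComp pIsZero [:: PComp pIsZero [:: PProj 0]].
Lemma eval_neq0 a rest : eval X pNeq0 (a :: rest) (a != 0).
Proof.
apply: eval_comp1; first by apply: eval_comp1; [constructor | apply: eval_isZero].
by have := eval_isZero (a == 0) [::]; case: (a == 0).
Qed.

Definition pEq := PComp pIsZero [:: PComp pAdd [:: PComp pSub [:: PProj 0; PProj 1];
                                                  PComp pSub [:: PProj 1; PProj 0]]].
Lemma eval_eq z n rest : eval X pEq (z :: n :: rest) (z == n).
Proof.
apply: eval_comp1; last first.
  rewrite (_ : (z == n) = ((n - z) + (z - n) == 0)); last first.
    by rewrite addn_eq0 !subn_eq0 eqn_leq andbC.
  exact: eval_isZero.
apply: eval_comp2; last exact: eval_add.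
- by apply: eval_comp2; [apply: eProj | apply: eProj | apply: eval_sub].
- by apply: eval_comp2; [apply: eProj | apply: eProj | apply: eval_sub].
Qed.

Definition pLt := PComp pNeq0 [:: PComp pSub [:: PProj 0; PProj 1]].
Lemma eval_lt s t rest : eval X pLt (s :: t :: rest) (s < t).
Proof.
apply: eval_comp1; first by apply: eval_comp2; [constructor | constructor | apply: eval_sub].
by rewrite -subn_gt0 lt0n; apply: eval_neq0.
Qed.

Definition pGe2 := PComp pNeq0 [:: PComp pPred [:: PProj 0]].
Lemma eval_ge2 c rest : eval X pGe2 (c :: rest) (2 <= c).
Proof.
apply: eval_comp1; first by apply: eval_comp1; [constructor | apply: eval_pred].
by rewrite (_ : (2 <= c) = (c.-1 != 0)); [apply: eval_neq0 | case: c => [|[|c]]].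
Qed.

Definition pEq1 := PComp pGuard [:: PProj 0; PComp pIsZero [:: PComp pPred [:: PProj 0]]].
Lemma eval_eq1 c rest : eval X pEq1 (c :: rest) (c == 1).
Proof.
apply: eval_comp2; [constructor | apply: eval_comp1; [apply: eval_comp1|] | ].
- by constructor.
- by apply: eval_pred.
- by apply: eval_isZero.
apply: eval_eq_val; first apply: eval_guard.
by case: c => [|[|c]].
Qed.

End ProgramLibrary.

(** * Clocked evaluation *)

(* [run_length c n] is the length of the initial segment of [0, n) on which
   [c k >= 2], i.e. on which the clocked computation answered a nonzero value. *)
Definition run_length (c : nat -> nat) : nat -> nat :=
  fix rl n := if n is n'.+1 then rl n' + ((rl n' == n') && (2 <= c n')) else 0.

Definition rec_iter (base : nat) (step : nat -> nat -> nat) : nat -> nat :=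
  fix it k := if k is k'.+1 then (if it k' == 0 then 0 else step k' (it k').-1) else base.

(* Clocked evaluation: [0] means "no answer yet", [y.+1] means output [y]; the
   clock [t] only bounds the searches of [PMu]. *)
Fixpoint ceval (X : nat -> bool) (p : prog) (args : seq nat) (t : nat) {struct p} : nat :=
  match p with
  | PZero => 1
  | PSucc => (nth 0 args 0).+2
  | PProj i => (nth 0 args i).+1
  | POracle i => (nat_of_bool (X (nth 0 args i))).+1
  | PComp f gs => let cs := [seq ceval X g args t | g <- gs] in
      if all (fun c => c != 0) cs then ceval X f (map predn cs) t else 0
  | PRec f g => match args with
      | [::] => 0
      | k :: rest => rec_iter (ceval X f rest t) (fun j a => ceval X g (j :: a :: rest) t) k
      end
  | PMu f => let s := run_length (fun k => ceval X f (k :: args) t) t in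
      if (s < t) && (ceval X f (s :: args) t == 1) then s.+1 else 0
  end.

Lemma run_length_ge2 c n k : k < run_length c n -> 2 <= c k.
Proof.
elim: n => //= n IH.
case: (boolP ((run_length c n == n) && (2 <= c n))) => [/andP [/eqP E H2]|_] /=.
- by rewrite addn1 ltnS leq_eqVlt => /orP [/eqP ->|/IH //]; rewrite E.
- by rewrite addn0; apply: IH.
Qed.

Lemma run_lengthE c n s : s < n -> (forall k, k < s -> 2 <= c k) -> c s < 2 ->
  run_length c n = s.
Proof.
move=> Hs Hg Hc.
have Hupto m : m <= s -> run_length c m = m.
  by elim: m => //= m IH Hm; rewrite IH ?eqxx ?Hg /=; lia.
elim: n Hs => // n IH; rewrite ltnS leq_eqVlt => /orP [/eqP <-|Hlt] /=.
- by rewrite Hupto // eqxx /= leqNgt Hc addn0.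
- by rewrite IH // (_ : (s == n) = false) ?addn0 //; apply/eqP; lia.
Qed.

Lemma ceval_sound X p args t y : ceval X p args t = y.+1 -> eval X p args y.
Proof.
elim/prog_nested_ind: p args t y.
- by move=> args t y [<-]; constructor.
- by move=> args t y [<-]; constructor.
- by move=> i args t y [<-]; constructor.
- by move=> i args t y [<-]; constructor.
- move=> f gs IHf IHgs args t y /=.
  case: ifP => // Hall /IHf Hf; econstructor; last exact: Hf.
  elim: gs IHgs Hall {Hf} => [|g gs IH] /=; first by constructor.
  move=> [Hg Hgs] /andP [Hnz Hall]; constructor; last exact: IH.
  by apply: (Hg _ t); case: (ceval X g args t) Hnz.
- move=> f g IHf IHg [|k rest] t y //=.
  elim: k y => [|k IH] y /=; first by move/IHf; constructor.
  case: ifP => // Hz Hg.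
  move: Hz IH Hg; case: (rec_iter _ _ k) => // z _ IH Hg.
  by econstructor; [apply: (IH z erefl) | apply: (IHg _ _ _ Hg)].
- move=> f IHf args t y /=.
  case: ifP => // /andP [Hlt /eqP /IHf Hc1] [<-].
  constructor => // k /run_length_ge2.
  case E: (ceval X f (k :: args) t) => [|[|z]] // _.
  by exists z; apply: IHf E.
Qed.

Lemma ceval_complete X p args y : eval X p args y ->
  exists t0, forall t, t0 <= t -> ceval X p args t = y.+1.
Proof.
move=> H; move: p args y H.
apply: (@eval_mut_ind X
   (fun p args y => exists t0, forall t, t0 <= t -> ceval X p args t = y.+1)
   (fun gs args ys => exists t0, forall t, t0 <= t ->
      [seq ceval X g args t | g <- gs] = map succn ys)).
- by move=> args; exists 0.
- by move=> args; exists 0.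
- by move=> i args; exists 0.
- by move=> i args; exists 0.
- move=> f gs args ys y _ [t1 H1] _ [t2 H2]; exists (maxn t1 t2) => t Ht /=.
  rewrite H1; last lia.
  have -> : all (fun c => c != 0) (map succn ys) by elim: ys {H1 H2}.
  by rewrite -map_comp map_id_in // H2 //; lia.
- by move=> f g rest y _ [t1 H1]; exists t1 => t Ht /=; apply: H1.
- move=> f g k rest z y _ [t1 H1] _ [t2 H2]; exists (maxn t1 t2) => t Ht.
  have := H1 t; rewrite /= => ->; last lia.
  by rewrite /= H2 //; lia.
- move=> f args y _ [t1 H1] Hlt.
  have [t2 Ht2] : exists u, forall k, k < y ->
      exists z, forall t, u <= t -> ceval X f (k :: args) t = z.+2.
    apply: (@uniform_bound
      (fun k u => exists z, forall t, u <= t -> ceval X f (k :: args) t = z.+2)).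
    - by move=> k u u' Huu [z Hz]; exists z => t Ht; apply: Hz; apply: leq_trans Huu Ht.
    - by move=> k /Hlt [z [_ [u Hu]]]; exists u, z.
  exists (maxn (maxn t1 t2) y.+1) => t Ht /=.
  have Hyt : y < t by lia.
  rewrite (@run_lengthE _ _ y) ?H1 ?eqxx ?Hyt //; try lia.
  by move=> k /Ht2 [z ->]; lia.
- by move=> args; exists 0.
- move=> g gs args y ys _ [t1 H1] _ [t2 H2]; exists (maxn t1 t2) => t Ht /=.
  by rewrite H1 ?H2 //; lia.
Qed.

Lemma haltsP X p args : halts X p args <-> exists t, ceval X p args t != 0.
Proof.
split=> [[y /ceval_complete [t0 Ht0]]|[t]]; first by exists t0; rewrite Ht0.
by case E: (ceval X p args t) => [|y] // _; exists y; apply: ceval_sound E.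
Qed.

(** * Clocked evaluation relative to an oracle, as a program *)

(* [width p] bounds the argument positions that [p] reads. *)
Fixpoint width (p : prog) : nat :=
  match p with
  | PZero => 0 | PSucc => 1 | PProj i => i.+1 | POracle i => i.+1
  | PComp f gs => foldr maxn 0 (map width gs)
  | PRec f g => maxn 1 (maxn (width f).+1 (width g).-1)
  | PMu f => (width f).-1
  end.

Definition pGuardAll (qs : seq prog) (body : prog) : prog :=
  foldr (fun q acc => PComp pGuard [:: q; acc]) body qs.

(* [compile J W sz p] computes [ceval (O h) p args t] from the argument list
   [args ++ junk] with [h] at position [W] and the clock [t] at position [W.+1],
   where [size args = sz] and the program [J] computes [O h z] from [[:: z; h]]. *)
Fixpoint compile (J : prog) (W sz : nat) (p : prog) {struct p} : prog :=
  match p with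
  | PZero => pConst 1
  | PSucc => PComp PSucc [:: PComp PSucc [:: PProj 0]]
  | PProj i => PComp PSucc [:: PProj i]
  | POracle i => PComp PSucc [:: PComp J [:: PProj i; PProj W]]
  | PComp f gs =>
      let V := maxn (size gs) (width f) in
      pGuardAll [seq compile J W sz g | g <- gs]
        (PComp (compile J V (size gs) f)
           ([seq PComp pPred [:: compile J W sz g] | g <- gs] ++
            nseq (V - size gs) PZero ++ [:: PProj W; PProj W.+1]))
  | PRec f g => if sz is s.+1 then
      PComp (PRec (compile J W.-1 s f)
        (PComp pGuard [:: PProj 1;
           PComp (compile J W.+1 s.+2 g)
             (PProj 0 :: PComp pPred [:: PProj 1] :: [seq PProj i | i <- iota 2 W.+1])]))
        [seq PProj i | i <- iota 0 W.+2]
      else PZero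
  | PMu f =>
      let cf := compile J W.+1 sz.+1 f in
      let step := PComp pAdd [:: PProj 1;
          PComp pGuard [:: PComp pEq [:: PProj 1; PProj 0];
            PComp pGuard [:: PComp pGe2 [:: PComp cf (PProj 0 :: [seq PProj i | i <- iota 2 W.+2])];
                             pConst 1]]] in
      let run := PComp (PRec PZero step) (PProj W.+1 :: [seq PProj i | i <- iota 0 W.+2]) in
      PComp pGuard [:: PComp pLt [:: run; PProj W.+1];
        PComp pGuard [:: PComp pEq1 [:: PComp cf (run :: [seq PProj i | i <- iota 0 W.+2])];
                         PComp PSucc [:: run]]]
  end.

Lemma nth_map_iota (F : nat -> nat) a n i : i < n -> nth 0 (map F (iota a n)) i = F (a + i).
Proof. by move=> Hi; rewrite (nth_map 0) ?size_iota // nth_iota. Qed.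

Lemma eval_guardAll X qs body args cs v :
  evalList X qs args cs -> eval X body args v ->
  eval X (pGuardAll qs body) args (if all (fun c => c != 0) cs then v else 0).
Proof.
elim=> {qs args cs} [//|q qs args c cs Hq _ IH Hbody] /=.
apply: eval_comp2; [exact: Hq | exact: IH | apply: eval_eq_val; first exact: eval_guard].
by case: c {Hq}.
Qed.

Section CompileCorrect.
Variables (C : nat -> bool) (J : prog) (O : nat -> nat -> bool).
Hypothesis evalJ : forall z h rest, eval C J (z :: h :: rest) (O h z).

Definition compile_spec p := forall W sz args args' h t,
  width p <= W -> size args = sz ->
  (forall i, i < W -> nth 0 args' i = nth 0 args i) ->
  nth 0 args' W = h -> nth 0 args' W.+1 = t ->
  eval C (compile J W sz p) args' (ceval (O h) p args t).

Lemma compile_spec_comp f gs : compile_spec f -> all_prop compile_spec gs ->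
  compile_spec (PComp f gs).
Proof.
move=> IHf IHgs W sz args args' h t /= HW Hsz Ha Hh Ht.
have IHgs' : forall g, g \in gs -> eval C (compile J W sz g) args' (ceval (O h) g args t).
  elim: gs IHgs HW {IHf} => // g gs IH /= [Hg Hgs]; rewrite geq_max => /andP [Hwg Hwgs] g'.
  by rewrite in_cons => /orP [/eqP -> | /IH]; [apply: Hg | apply].
have Hpred : evalList C [seq PComp pPred [:: compile J W sz g] | g <- gs] args'
    [seq (ceval (O h) g args t).-1 | g <- gs].
  by apply: evalList_map => g /IHgs' Hg; apply: eval_comp1 Hg _; apply: eval_pred.
have Hcompiled := evalList_map IHgs'.
set V := maxn (size gs) (width f).
have HV : size gs <= V by apply: leq_maxl.
apply: eval_guardAll Hcompiled _; econstructor.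
- apply: evalList_cat Hpred (evalList_cat (evalList_nseq _ _ _) _).
  by do 2 (constructor; first exact: eProj); constructor.
- rewrite -map_comp; apply: IHf; first exact: leq_maxr.
  + by rewrite size_map.
  + move=> i Hi; rewrite nth_cat size_map; case: ifP => // Hig.
    have Hgi : size gs <= i by rewrite leqNgt Hig.
    rewrite nth_cat size_nseq ltn_sub2rE // Hi nth_nseq ltn_sub2rE // Hi.
    by rewrite nth_default // size_map.
  + by rewrite -Hh nth_cat size_map ltnNge HV /= nth_cat size_nseq ltnn subnn.
  + rewrite -Ht nth_cat size_map ltnNge (leqW HV) /= nth_cat size_nseq.
    by rewrite (subSn HV) ltnNge leqnSn /= subSnn.
Qed.

Lemma compile_spec_rec f g : compile_spec f -> compile_spec g -> compile_spec (PRec f g).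
Proof.
move=> IHf IHg [|W] sz args args' h t HW Hsz Ha Hh Ht; first by move: HW; rewrite /= geq_max.
rewrite /= !geq_max in HW; case/and3P: HW => _ Hwf Hwg.
case: args Hsz Ha => [|k rest] <- Ha; first by constructor.
cbn [compile size]; econstructor; first exact: evalList_proj.
have -> : [seq nth 0 args' i | i <- iota 0 W.+3] = k :: [seq nth 0 args' i | i <- iota 1 W.+2].
  by rewrite /= Ha.
set rest' := [seq nth 0 args' i | i <- iota 1 W.+2].
have Hr i : i < W.+2 -> nth 0 rest' i = nth 0 args' i.+1 by move=> Hi; rewrite nth_map_iota.
cbn [ceval]; set F := rec_iter _ _.
apply: (@eval_rec C _ _ F).
- apply: IHf => //; rewrite ?Hr //.
  by move=> i /= Hi; rewrite Hr ?Ha //; lia.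
- move=> j; apply: eval_comp2; [exact: eProj | | exact: eval_guard].
  econstructor.
  + constructor; first exact: eProj.
    constructor; last exact: evalList_proj.
    by apply: eval_comp1; [exact: eProj | exact: eval_pred].
  + apply: (IHg _ _ [:: j, (F j).-1 & rest]) => //.
    * lia.
    * move=> [|[|i]] Hi //; cbn [nth]; rewrite nth_map_iota ?add2n; last lia.
      by cbn [nth]; rewrite Hr ?Ha //; lia.
    * by cbn [nth]; rewrite nth_map_iota ?add2n //; cbn [nth]; rewrite Hr.
    * by cbn [nth]; rewrite nth_map_iota ?add2n //; cbn [nth]; rewrite Hr.
Qed.

Lemma compile_spec_mu f : compile_spec f -> compile_spec (PMu f).
Proof.
move=> IHf W sz args args' h t HW Hsz Ha Hh Ht; rewrite [width _]/= in HW.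
cbn [compile ceval].
set c := fun k => ceval (O h) f (k :: args) t.
have Hc n B : (forall i, i < W.+2 -> nth 0 B i = nth 0 args' i) ->
    eval C (compile J W.+1 sz.+1 f) (n :: B) (c n).
  move=> HB; apply: IHf; rewrite /= ?HB ?Hsz //; first lia.
  by move=> [|i] Hi //=; rewrite HB ?Ha; lia.
have HA i : i < W.+2 -> nth 0 [seq nth 0 args' i | i <- iota 0 W.+2] i = nth 0 args' i.
  by move=> Hi; rewrite nth_map_iota.
set run := PComp (PRec PZero _) _.
have Hrun : eval C run args' (run_length c t).
  econstructor; first by constructor; [exact: eProj | exact: evalList_proj].
  rewrite Ht; apply: (@eval_rec C _ _ (run_length c)) => [|n]; first exact: eZero.
  apply: eval_comp2; [exact: eProj | | ].
  + apply: eval_comp2; first by apply: eval_comp2; [exact: eProj | exact: eProj | exact: eval_eq].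
    * apply: eval_comp2; [ | exact: eval_const | exact: eval_guard].
      apply: eval_comp1; last exact: eval_ge2.
      econstructor; first by constructor; [exact: eProj | exact: evalList_proj].
      by apply: Hc => i Hi; rewrite nth_map_iota //= HA.
    * exact: eval_guard.
  + apply: eval_eq_val; first exact: eval_add.
    by cbn [nth run_length]; case: (run_length c n == n); case: (2 <= c n).
apply: eval_comp2.
- by apply: eval_comp2; [exact: Hrun | exact: eProj | rewrite Ht; exact: eval_lt].
- apply: eval_comp2; [ | by apply: eval_comp1; [exact: Hrun | constructor] | exact: eval_guard].
  apply: eval_comp1; last exact: eval_eq1.
  econstructor; first by constructor; [exact: Hrun | exact: evalList_proj].
  by apply: Hc => i Hi; rewrite nth_map_iota.
- apply: eval_eq_val; first exact: eval_guard.
  by rewrite /c; case: (run_length _ t < t) => //=; case: (_ == 1).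
Qed.

Lemma compile_correct p : compile_spec p.
Proof.
elim/prog_nested_ind: p.
- by move=> *; apply: eval_const.
- move=> W sz args args' h t /= HW _ Ha _ _.
  apply: eval_comp1; first by apply: eval_comp1; [exact: eProj | constructor].
  by rewrite /= Ha //; constructor.
- move=> i W sz args args' h t /= HW _ Ha _ _.
  by apply: eval_comp1; [exact: eProj | rewrite /= Ha //; constructor].
- move=> i W sz args args' h t /= HW _ Ha Hh _.
  apply: eval_comp1; first by apply: eval_comp2; [exact: eProj | exact: eProj | exact: evalJ].
  by rewrite /= Hh Ha //; constructor.
- exact: compile_spec_comp.
- exact: compile_spec_rec.
- exact: compile_spec_mu.
Qed.

End CompileCorrect.

Section ExistsHalts.
Variables (C : nat -> bool) (J : prog) (O : nat -> nat -> bool).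
Hypothesis evalJ : forall z h rest, eval C J (z :: h :: rest) (O h z).
Variable p : prog.

Let Wp := maxn 1 (width p).

(* runs [p] on [[:: x]] with oracle [O n] and clock [e], from the arguments [n; _; e; x] *)
Definition pClocked := PComp (compile J Wp 1 p)
   (PProj 3 :: nseq Wp.-1 PZero ++ [:: PProj 0; PProj 2]).

Lemma eval_clocked n z e x rest :
  eval C pClocked (n :: z :: e :: x :: rest) (ceval (O n) p [:: x] e).
Proof.
have HW : 1 <= Wp by apply: leq_maxl.
econstructor.
- constructor; first exact: eProj.
  apply: evalList_cat; first exact: evalList_nseq.
  by do 2 (constructor; first exact: eProj); constructor.
- apply: compile_correct => //; first exact: leq_maxr.
  + move=> [|i] Hi //=; rewrite nth_cat size_nseq.
    have Hi' : i < Wp.-1 by rewrite -ltnS prednK.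
    by rewrite Hi' nth_nseq Hi' nth_nil.
  + by case: Wp HW => [|w] // _; rewrite /= nth_cat size_nseq ltnn subnn.
  + by case: Wp HW => [|w] // _; rewrite /= nth_cat size_nseq ltnNge leqnSn /= subSnn.
Qed.

Definition pCount := PRec PZero (PComp pAdd [:: PProj 1; PComp pNeq0 [:: pClocked]]).

Lemma eval_count k e x rest :
  eval C pCount (k :: e :: x :: rest) (\sum_(n < k) (ceval (O n) p [:: x] e != 0)).
Proof.
apply: (@eval_rec C _ _ (fun k => \sum_(n < k) (ceval (O n) p [:: x] e != 0))).
  by rewrite big_ord0; constructor.
move=> n; rewrite big_ord_recr /=.
apply: eval_comp2; [exact: eProj | apply: eval_comp1; [exact: eval_clocked | exact: eval_neq0] |].
exact: eval_add.
Qed.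

Definition pNoneHalts :=
  PComp pIsZero [:: PComp pCount [:: PComp PSucc [:: PProj 0]; PProj 0; PProj 1]].

Lemma eval_noneHalts e x :
  eval C pNoneHalts [:: e; x] [forall n : 'I_e.+1, ceval (O n) p [:: x] e == 0].
Proof.
set count := \sum_(n < e.+1) (ceval (O n) p [:: x] e != 0).
have -> : [forall n : 'I_e.+1, ceval (O n) p [:: x] e == 0] = (count == 0).
  by rewrite sum_nat_eq0; apply: eq_forallb => n; case: eqP.
apply: (@eval_comp1 _ _ _ _ count); last exact: eval_isZero.
apply: eval_comp3; last exact: eval_count; try exact: eProj.
by apply: eval_comp1; [exact: eProj | constructor].
Qed.

Lemma sigma1_exists_halts : sigma1 C (fun x => exists h, halts (O h) p [:: x]).
Proof.
exists (PMu pNoneHalts) => x; split.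
- move=> [h /haltsP [t Ht]].
  case E: (ceval (O h) p [:: x] t) Ht => [|y] // _.
  have [t0 Ht0] := ceval_complete (ceval_sound E).
  have Hex : exists e, ~~ [forall n : 'I_e.+1, ceval (O n) p [:: x] e == 0].
    exists (maxn h t0); apply/forallPn.
    by exists (@Ordinal (maxn h t0).+1 h (leq_maxl h t0)); rewrite /= Ht0 ?leq_maxr.
  have [e0 He0 Hmin] := ex_minnP Hex.
  exists e0; constructor; first by have := eval_noneHalts e0 x; rewrite (negbTE He0).
  move=> k Hk; exists 0.
  have Hall : [forall n : 'I_k.+1, ceval (O n) p [:: x] k == 0].
    by apply: contraTT Hk => /Hmin; rewrite -leqNgt.
  by have := eval_noneHalts k x; rewrite Hall.
- move=> [y Hy]; inversion Hy as [| | | | | | |? ? ? Hzero _]; subst.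
  have /forallPn [n Hn] : ~~ [forall n : 'I_y.+1, ceval (O n) p [:: x] y == 0].
    by have := eval_det (eval_noneHalts y x) Hzero; case: [forall n, _].
  by exists n; apply/haltsP; exists y.
Qed.

End ExistsHalts.

(** * Mathias conditions with computable reservoirs *)

Fixpoint bits_code (P : nat -> bool) n :=
  if n is n'.+1 then P 0 + (bits_code (fun x => P x.+1) n').*2 else 0.

Lemma iter_half0 x : iter x half 0 = 0.
Proof. by elim: x => //= x ->. Qed.

Lemma bitn_code n P x : bitn (bits_code P n) x = (x < n) && P x.
Proof.
rewrite /bitn; elim: n P x => [|n IH] P x /=; first by rewrite iter_half0.
case: x => [|x] /=; first by rewrite oddD odd_double addbF oddb.
by rewrite -iterS iterSr half_bit_double IH.
Qed.

Lemma bitn0 x : bitn 0 x = false.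
Proof. by rewrite /bitn iter_half0. Qed.

Section Forcing.
Variable C : nat -> bool.

(* The oracle [G (+) C] for [G] the finite set [stem] enlarged by those elements
   of the reservoir [Y] that lie in the finite set coded by [h]. *)
Definition trial_oracle (stem : nat) (Y : nat -> bool) (h : nat) : nat -> bool :=
  join (fun x => bitn stem x || (bitn h x && Y x)) C.

Definition pTrialOracle (stem : nat) (pY : prog) : prog :=
  let z2 := PComp pHalf [:: PProj 0] in
  let oddz := PComp pOdd [:: PProj 0] in
  let inG := PComp pNeq0 [:: PComp pAdd [:: PComp pBit [:: pConst stem; z2];
                 PComp pGuard [:: PComp pBit [:: PProj 1; z2]; PComp pY [:: z2]]]] in
  PComp pAdd [:: PComp pGuard [:: oddz; PComp (POracle 0) [:: z2]];
                 PComp pGuard [:: PComp pIsZero [:: oddz]; inG]].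

Lemma eval_trialOracle stem pY (Y : nat -> bool) : (forall x, eval C pY [:: x] (Y x)) ->
  forall z h rest, eval C (pTrialOracle stem pY) (z :: h :: rest) (trial_oracle stem Y h z).
Proof.
move=> HY z h rest.
have Hz2 : eval C (PComp pHalf [:: PProj 0]) (z :: h :: rest) z./2.
  by apply: eval_comp1; [exact: eProj | exact: eval_half].
have Hodd : eval C (PComp pOdd [:: PProj 0]) (z :: h :: rest) (odd z).
  by apply: eval_comp1; [exact: eProj | exact: eval_odd].
apply: eval_comp2.
- apply: eval_comp2; [exact: Hodd | | exact: eval_guard].
  by apply: eval_comp1; [exact: Hz2 | constructor].
- apply: eval_comp2; [apply: eval_comp1; [exact: Hodd | exact: eval_isZero] | | exact: eval_guard].
  apply: eval_comp1; last exact: eval_neq0.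
  apply: eval_comp2; last exact: eval_add.
  + by apply: eval_comp2; [exact: eval_const | exact: Hz2 | exact: eval_bit].
  + apply: eval_comp2; last exact: eval_guard.
    * by apply: eval_comp2; [exact: eProj | exact: Hz2 | exact: eval_bit].
    * by apply: eval_comp1; [exact: Hz2 | exact: HY].
- apply: eval_eq_val; first exact: eval_add.
  rewrite /trial_oracle /join /=; case: (odd z) => /=; first by case: (C _).
  by case: (bitn stem _); case: (bitn h _); case: (Y _).
Qed.

(* A Mathias condition: a finite stem (coded by [stem], all elements at most
   [height]) and a C-computable infinite reservoir above [height]. *)
Record cond :=
  Cond { stem : nat; height : nat; reservoir : nat -> bool; reservoir_prog : prog }.

Definition cond_valid (c : cond) : Prop :=
  [/\ (forall x, bitn (stem c) x -> x <= height c),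
      (forall x, reservoir c x -> height c < x),
      infinite_set (reservoir c) &
      (forall x, eval C (reservoir_prog c) [:: x] (reservoir c x))].

Definition satisfies (c : cond) (G : nat -> bool) : Prop :=
  forall x, (x <= height c -> G x = bitn (stem c) x) /\ (height c < x -> G x -> reservoir c x).

Definition extends (c' c : cond) : Prop :=
  [/\ height c <= height c',
      (forall x, x <= height c -> bitn (stem c') x = bitn (stem c) x),
      (forall x, height c < x -> x <= height c' -> bitn (stem c') x -> reservoir c x) &
      (forall x, reservoir c' x -> reservoir c x)].

Lemma extends_refl c : extends c c.
Proof. by split => // x Hx /(leq_trans Hx); rewrite ltnn. Qed.

Lemma extends_trans c1 c2 c3 : extends c1 c2 -> extends c2 c3 -> extends c1 c3.
Proof.
move=> [H1 H2 H3 H4] [K1 K2 K3 K4]; split.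
- exact: leq_trans K1 H1.
- by move=> x Hx; rewrite H2 ?K2 //; apply: leq_trans Hx K1.
- move=> x Hx Hx2 Hb; case: (leqP x (height c2)) => Hxc.
  + by apply: K3 => //; rewrite -H2.
  + by apply: K4; apply: H3.
- by move=> x /H4 /K4.
Qed.

Definition shrink_reservoir (c : cond) (P : nat -> bool) (pP : prog) : cond :=
  Cond (stem c) (height c) (fun x => reservoir c x && P x)
       (PComp pGuard [:: reservoir_prog c; pP]).

Lemma shrink_reservoir_valid c P pP : cond_valid c ->
  infinite_set (fun x => reservoir c x && P x) -> (forall x, eval C pP [:: x] (P x)) ->
  cond_valid (shrink_reservoir c P pP).
Proof.
move=> [V1 V2 V3 V4] Hinf HP; split=> //= [x /andP [/V2] //|x].
apply: eval_comp2; [exact: V4 | exact: HP | apply: eval_eq_val; first exact: eval_guard].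
by case: (reservoir c x); case: (P x).
Qed.

Lemma shrink_reservoir_extends c P pP : extends (shrink_reservoir c P pP) c.
Proof.
by split=> //= [x Hx /(leq_trans Hx)|x /andP []//]; rewrite ltnn.
Qed.

(* Add the elements of [K] (a finite part of the reservoir, below [b]) to the stem
   and cut the reservoir above [b]. *)
Definition commit (c : cond) (K : nat -> bool) (b : nat) : cond :=
  Cond (bits_code (fun z => bitn (stem c) z || K z) b.+1) b
       (fun x => reservoir c x && (b < x))
       (PComp pGuard [:: reservoir_prog c; PComp pLt [:: pConst b; PProj 0]]).

Lemma bitn_commit c (K : nat -> bool) b z :
  z <= b -> bitn (stem (commit c K b)) z = bitn (stem c) z || K z.
Proof. by move=> Hz; rewrite /commit bitn_code ltnS Hz. Qed.

Lemma commit_valid c (K : nat -> bool) b : cond_valid c -> cond_valid (commit c K b).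
Proof.
move=> Hc.
have [V1 V2 V3 V4] := Hc; split.
- by move=> x; rewrite /commit bitn_code => /andP [].
- by move=> x /andP [].
- move=> k; case: (V3 (maxn k b.+1)) => x [Hx Yx]; exists x; rewrite /= Yx.
  by split; [apply: leq_trans Hx; apply: leq_maxl | apply: leq_trans Hx; apply: leq_maxr].
- move=> x; apply: eval_comp2; [exact: V4 | | ].
  + by apply: eval_comp2; [exact: eval_const | exact: eProj | exact: eval_lt].
  + apply: eval_eq_val; first exact: eval_guard.
    by rewrite /=; case: (reservoir c x); case: (b < x).
Qed.

Lemma commit_extends c (K : nat -> bool) b : cond_valid c -> height c <= b ->
  (forall z, K z -> reservoir c z) -> extends (commit c K b) c.
Proof.
move=> Hc Hb HK; have [V1 V2 _ _] := Hc; split => //.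
- move=> x Hx; rewrite bitn_commit; last exact: leq_trans Hx Hb.
  case Kx: (K x); last by rewrite orbF.
  by have := V2 _ (HK _ Kx); rewrite ltnNge Hx.
- by move=> x Hx Hxb; rewrite bitn_commit // => /orP [/V1|/HK //]; rewrite leqNgt Hx.
- by move=> x /andP [].
Qed.

End Forcing.

Lemma half_ltn z u : z < u -> z./2 < u.
Proof. by apply: leq_ltn_trans; rewrite leq_half_double -addnn leqW // leq_addr. Qed.

Section Steps.
Variable C : nat -> bool.

Lemma cohesive_step (R : nat -> nat -> bool) i c : unif_computable C R -> cond_valid C c ->
  exists c', [/\ cond_valid C c', extends c' c &
     (forall x, reservoir c' x -> R i x) \/ (forall x, reservoir c' x -> ~~ R i x)].
Proof.
move=> [pR HpR] Hc; have [_ _ Hinf _] := Hc.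
pose pRi := PComp pR [:: pConst i; PProj 0].
have HRi x : eval C pRi [:: x] (R i x).
  by apply: eval_comp2; [exact: eval_const | exact: eProj | exact: HpR].
have HnRi x : eval C (PComp pIsZero [:: pRi]) [:: x] (~~ R i x).
  by apply: eval_comp1; [exact: HRi | case: (R i x) (eval_isZero C (R i x) [::])].
case: (classic (infinite_set (fun x => reservoir c x && R i x))) => HinfR.
- exists (shrink_reservoir c (R i) pRi).
  split; [exact: shrink_reservoir_valid | exact: shrink_reservoir_extends |].
  by left => x /andP [].
- have [k Hk] : exists k, forall x, k <= x -> reservoir c x -> ~~ R i x.
    apply: NNPP => Hn; apply: HinfR => k; apply: NNPP => Hn2; apply: Hn.
    exists k => x Hx Yx; apply/negP => Rx; apply: Hn2; exists x; by rewrite Yx Rx.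
  exists (shrink_reservoir c (fun x => ~~ R i x) (PComp pIsZero [:: pRi])).
  split; [apply: shrink_reservoir_valid => // k' | exact: shrink_reservoir_extends |].
  + case: (Hinf (maxn k k')) => x [Hx Yx]; exists x; rewrite Yx Hk //; last first.
      by apply: leq_trans Hx; apply: leq_maxl.
    by split=> //; apply: leq_trans Hx; apply: leq_maxr.
  + by right => x /andP [].
Qed.

Lemma growth_step c k : cond_valid C c ->
  exists c', [/\ cond_valid C c', extends c' c &
    exists x, [/\ k <= x, x <= height c' & bitn (stem c') x]].
Proof.
move=> Hc; have [_ V2 V3 _] := Hc; case: (V3 k) => x [Hkx Yx].
have HK z : pred1 x z -> reservoir c z by move/eqP ->.
have Hb : height c <= x by apply: ltnW; apply: V2.
exists (commit c (pred1 x) x); split; [exact: commit_valid | exact: commit_extends Hc Hb HK |].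
by exists x; rewrite bitn_commit //= eqxx orbT.
Qed.

Definition join_halts (G : nat -> bool) (p : prog) (x : nat) : Prop :=
  halts (join G C) p [:: x].

Definition fair_instance (A0 A1 : pred bitseq) m N (p : prog) (M : matrix_s m N)
  (G : nat -> bool) : Prop :=
  disjoint_matrix M -> essential (join_halts G p) M ->
  exists V : valuation m N,
    [/\ is_Mval M V, diagonalizes A0 A1 V & holds (join_halts G p) V].

(* Any computation relative to a member of [c] is already a computation relative
   to the stem of [c] enlarged by a finite part of the reservoir. *)
Lemma satisfies_trial c G p x : cond_valid C c -> satisfies c G ->
  join_halts G p x -> exists h, halts (trial_oracle C (stem c) (reservoir c) h) p [:: x].
Proof.
move=> [V1 _ _ _] HG [y /eval_use [u Hu]].
exists (bits_code (fun z => G z && (height c < z)) u); exists y; apply: Hu => z Hz.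
rewrite /trial_oracle /join; case: (odd z) => //.
rewrite bitn_code half_ltn //=; case: (leqP z./2 (height c)) => Hle.
- by rewrite (proj1 (HG _) Hle) andbF orbF.
- have -> : bitn (stem c) z./2 = false by apply/negP => /V1; rewrite leqNgt Hle.
  by case Gz: (G z./2) => //=; apply: (proj2 (HG _) Hle Gz).
Qed.

Lemma agree_commit_trial c h u G : cond_valid C c ->
  satisfies (commit c (fun z => bitn h z && reservoir c z) (maxn (height c) u)) G ->
  agree u (trial_oracle C (stem c) (reservoir c) h) (join G C).
Proof.
move=> Hc HG z Hz; rewrite /trial_oracle /join; case: (odd z) => //.
have Hz2 : z./2 <= maxn (height c) u.
  by apply: ltnW; apply: leq_trans (half_ltn Hz) (leq_maxr _ _).
by rewrite (proj1 (HG _) Hz2) bitn_commit.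
Qed.

Lemma fairness_step n A0 A1 c m p (M : matrix_s m (2 ^ n * m)) :
  fair n C A0 A1 -> cond_valid C c ->
  exists c', [/\ cond_valid C c', extends c' c &
    forall G, satisfies c' G -> fair_instance A0 A1 p M G].
Proof.
move=> Hfair Hc; have [V1 V2 V3 V4] := Hc.
pose psi x := exists h, halts (trial_oracle C (stem c) (reservoir c) h) p [:: x].
have Hpsi : sigma1 C psi := sigma1_exists_halts (eval_trialOracle (stem c) V4) p.
case: (classic (disjoint_matrix M /\ essential psi M)) => [[Hd He]|Hno].
- have [V [HV [Hdiag [h [y Hy]]]]] := Hfair m psi M Hpsi Hd He.
  have [u Hu] := eval_use Hy.
  set K := fun z => bitn h z && reservoir c z.
  have HK z : K z -> reservoir c z by case/andP.
  exists (commit c K (maxn (height c) u)).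
  split; [exact: commit_valid | exact: commit_extends (leq_maxl _ _) HK |].
  move=> G HG _ _; exists V; split => //; exists y.
  exact/Hu/agree_commit_trial.
- exists c; split => //; first exact: extends_refl.
  move=> G HG Hd He; exfalso; apply: Hno; split => // s.
  have [V [HV [Hgt Hphi]]] := He s.
  by exists V; split => //; split => //; apply: satisfies_trial Hphi.
Qed.

End Steps.

Definition matrix_of_seq n m (L : seq (seq bitseq)) : matrix_s m (2 ^ n * m) :=
  fun i j => nth [::] (nth [::] L i) j.

Definition seq_of_matrix m N (M : matrix_s m N) : seq (seq bitseq) :=
  [seq [seq M i j | j <- enum 'I_N] | i <- enum 'I_m].

Lemma seq_of_matrixK n m (M : matrix_s m (2 ^ n * m)) :
  @matrix_of_seq n m (seq_of_matrix M) = M.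
Proof.
apply: functional_extensionality => i; apply: functional_extensionality => j.
rewrite /matrix_of_seq /seq_of_matrix (nth_map i) ?size_enum_ord // nth_ord_enum.
by rewrite (nth_map j) ?size_enum_ord // nth_ord_enum.
Qed.

Definition cond0 : cond := Cond 0 0 (fun x => 0 < x) (PComp pNeq0 [:: PProj 0]).

Lemma cond0_valid C : cond_valid C cond0.
Proof.
split => //= [x|k|x]; first by rewrite bitn0.
- by exists k.+1; split.
- by apply: eval_comp1; [exact: eProj | rewrite lt0n; exact: eval_neq0].
Qed.

Section GenericSequence.
Variable cs : nat -> cond.
Hypothesis cs_extends : forall k, extends (cs k.+1) (cs k).
Hypothesis cs_height : forall k, k <= height (cs k.+1).

Lemma extends_chain k j : k <= j -> extends (cs j) (cs k).
Proof.
elim: j => [|j IH]; first by rewrite leqn0 => /eqP ->; apply: extends_refl.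
rewrite leq_eqVlt => /orP [/eqP ->|/IH]; first exact: extends_refl.
exact: extends_trans.
Qed.

(* The generic set decides [x] at stage [x.+1], since [x <= height (cs x.+1)]. *)
Definition generic_set (x : nat) : bool := bitn (stem (cs x.+1)) x.

Lemma satisfies_generic k : satisfies (cs k) generic_set.
Proof.
move=> x; split.
- move=> Hx; rewrite /generic_set; case: (leqP x.+1 k) => Hk.
  + by case: (extends_chain Hk) => _ -> //; apply: cs_height.
  + by case: (extends_chain (ltnW Hk)) => _ ->.
- move=> Hx Gx; have Hk : k <= x.+1.
    by case: k Hx => [|k] // Hx; apply: leq_trans (cs_height k) _; apply: ltnW.
  by case: (extends_chain Hk) => _ _ H _; apply: H => //; apply: cs_height.
Qed.

End GenericSequence.

Lemma generic_sequence C (P : nat -> cond -> Prop) :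
  (forall k c, cond_valid C c -> exists c', [/\ cond_valid C c', extends c' c & P k c']) ->
  exists cs : nat -> cond,
    forall k, [/\ cond_valid C (cs k), extends (cs k.+1) (cs k) & P k (cs k.+1)].
Proof.
move=> Hstep.
have Hstep' k c : exists c', cond_valid C c -> [/\ cond_valid C c', extends c' c & P k c'].
  case: (classic (cond_valid C c)) => [/(Hstep k) [c' Hc']|Hnv]; by [exists c' | exists c].
pose next k c := proj1_sig (constructive_indefinite_description _ (Hstep' k c)).
have Hnext k c : cond_valid C c ->
    [/\ cond_valid C (next k c), extends (next k c) c & P k (next k c)].
  exact: (proj2_sig (constructive_indefinite_description _ (Hstep' k c))).
pose cs := fix cs k := if k is k'.+1 then next k' (cs k') else cond0.
have Hvalid k : cond_valid C (cs k).
  by elim: k => [|k IH]; [apply: cond0_valid | case: (Hnext k _ IH)].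
by exists cs => k; have [] := Hnext k _ (Hvalid k).
Qed.

Section Requirements.
Variables (C : nat -> bool) (n : nat) (A0 A1 : pred bitseq) (R : nat -> nat -> bool).

Definition decides_instance (k : nat) (c : cond) : Prop :=
  if (unpickle k : option (nat * prog * seq (seq bitseq))) is Some (m, p, L)
  then forall G, satisfies c G -> fair_instance C A0 A1 p (@matrix_of_seq n m L) G
  else True.

Definition meets (k : nat) (c : cond) : Prop :=
  [/\ (forall x, reservoir c x -> R k x) \/ (forall x, reservoir c x -> ~~ R k x),
      exists x, [/\ k <= x, x <= height c & bitn (stem c) x] &
      decides_instance k c].

Lemma meets_step k c : fair n C A0 A1 -> unif_computable C R -> cond_valid C c ->
  exists c', [/\ cond_valid C c', extends c' c & meets k c'].
Proof.
move=> Hfair HR Hc.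
have [c1 [Hc1 He1 Hcoh]] := cohesive_step k HR Hc.
have [c2 [Hc2 He2 [x [Hkx Hx Hstem]]]] := growth_step k Hc1.
have [c3 [Hc3 He3 Hfi]] : exists c3, [/\ cond_valid C c3, extends c3 c2 & decides_instance k c3].
  rewrite /decides_instance; case: unpickle => [[[m p] L]|]; last first.
    by exists c2; split => //; apply: extends_refl.
  exact: fairness_step.
have [Hh3 Hs3 _ Hr3] := He3; have [_ _ _ Hr2] := He2.
exists c3; split => //; first by apply: extends_trans He3 (extends_trans He2 He1).
split => //.
- by case: Hcoh => H; [left|right] => y /Hr3 /Hr2 /H.
- by exists x; rewrite Hs3 //; split => //; apply: leq_trans Hh3.
Qed.

Section Limit.
Variables (cs : nat -> cond) (G : nat -> bool).
Hypotheses (cs_meets : forall k, meets k (cs k.+1)) (G_satisfies : forall k, satisfies (cs k) G).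

Lemma limit_cohesive : cohesive R G.
Proof.
split=> [k|i].
- have [_ [x [Hkx Hx Hs]] _] := cs_meets k.
  by exists x; rewrite (proj1 (G_satisfies k.+1 x) Hx).
- have [[H|H] _ _] := cs_meets i; [left|right]; exists (height (cs i.+1)).+1 => x Hx Gx;
    by apply: H; apply: (proj2 (G_satisfies i.+1 x) Hx Gx).
Qed.

Lemma limit_fair : fair n (join G C) A0 A1.
Proof.
move=> m phi M [p Hp] Hd He.
pose k := pickle (m, p, seq_of_matrix M).
have [_ _] := cs_meets k.
rewrite /decides_instance /k pickleK seq_of_matrixK => /(_ G (G_satisfies _) Hd).
have He' : essential (join_halts C G p) M.
  by move=> s; have [V [HV [Hgt /Hp Hphi]]] := He s; exists V.
by case/(_ He') => V [HV Hdiag /Hp Hphi]; exists V.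
Qed.

End Limit.
End Requirements.

Theorem mainTheorem8 :
  forall n : nat, 1 <= n ->
  forall (A0 A1 : pred bitseq) (C : nat -> bool),
    fair n C A0 A1 ->
    forall R : nat -> nat -> bool, unif_computable C R ->
    exists G : nat -> bool, cohesive R G /\ fair n (join G C) A0 A1.
Proof.
(* The construction never uses [1 <= n]. *)
move=> n _ A0 A1 C Hfair R HR.
have [cs Hcs] := generic_sequence (fun k c => meets_step k Hfair HR).
have cs_extends k : extends (cs k.+1) (cs k) by case: (Hcs k).
have cs_meets k : meets C n A0 A1 R k (cs k.+1) by case: (Hcs k).
have cs_height k : k <= height (cs k.+1).
  by have [_ [x [Hkx Hx _]] _] := cs_meets k; apply: leq_trans Hx.
have Hsat := satisfies_generic cs_extends cs_height.
by exists (generic_set cs); split; [apply: limit_cohesive Hsat | apply: limit_fair Hsat].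
Qed.
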